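(* Let $p$ be a prime, $n\in\mathbb{N}^*$ and $\sigma$ a $p$-uniform morphism on $\mathcal A_m$. Then $$\begin{pmatrix}P_{\sigma^n(0)}(T)\\ \vdots\\ P_{\sigma^n(m-1)}(T)\end{pmatrix}=M_\sigma(T^{p^{n-1}})M_\sigma(T^{p^{n-2}})\cdots M_\sigma(T)\begin{pmatrix}0\\1\\ \vdots\\ m-1\end{pmatrix}.$$
   Context: $\mathcal A_m=\{0,\dots,m-1\}$, letters viewed in $\mathbb{F}_p$. For $W=w_0\cdots w_{r-1}$, $P_W(T)=\sum_{j=0}^{r-1}w_{r-1-j}T^j$, and $\beta_{W,j}(T)=\sum_{i:\,w_i=j}T^{r-1-i}\in\mathbb{F}_p[T]$. $M_\sigma(T)=(\beta_{\sigma(i),j}(T))_{0\le i,j\le m-1}$. A $p$-uniform morphism sends each letter to a word of length $p$. *)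

From HB Require Import structures.
From mathcomp Require Import all_boot all_order all_algebra.
Set Implicit Arguments. Unset Strict Implicit. Unset Printing Implicit Defensive.
Import GRing.Theory.
Local Open Scope ring_scope.

Definition morph_word (m : nat) (sigma : 'I_m -> seq 'I_m) (w : seq 'I_m) : seq 'I_m :=
  flatten (map sigma w).

Definition morph_iter (m : nat) (sigma : 'I_m -> seq 'I_m) (n : nat) (a : 'I_m) : seq 'I_m :=
  iter n (morph_word sigma) [:: a].

Definition PW (R : nzRingType) (m : nat) (W : seq 'I_m) : {poly R} :=
  \sum_(j < size W) ((nth 0%N (map val W) (size W - 1 - j))%:R *: 'X^j).

Definition betaW (R : nzRingType) (m : nat) (W : seq 'I_m) (j : nat) : {poly R} :=
  \sum_(i < size W | nth 0%N (map val W) i == j) 'X^(size W - 1 - i).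

Definition Msig (R : comNzRingType) (m : nat) (sigma : 'I_m -> seq 'I_m)
  (x : {poly R}) : 'M[{poly R}]_m :=
  \matrix_(i < m, j < m) ((betaW R (sigma i) j) \Po x).

Fixpoint Msig_prod (R : comNzRingType) (m : nat) (sigma : 'I_m -> seq 'I_m)
  (p n : nat) : 'M[{poly R}]_m :=
  match n with
  | 0 => 1%:M
  | k.+1 => Msig sigma ('X^(p ^ k)) *m Msig_prod R sigma p k
  end.

From HB Require Import structures.
From mathcomp Require Import all_boot all_order all_algebra.
Import GRing.Theory.
From mathcomp Require Import zify.
Local Open Scope ring_scope.

(* Since sigma^(n+1)(a) is the concatenation of the blocks sigma^n(b) over the
   letters b of sigma(a), each of length p^n, the polynomial of sigma^(n+1)(a)
   is sum_b beta_{sigma(a),b}(T^(p^n)) P_{sigma^n(b)}(T): this is one row of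
   M_sigma(T^(p^n)) times the column of the P_{sigma^n(b)}, and induction on n
   gives the product formula. *)

Lemma size_flatten_uniform {T U : Type} {f : T -> seq U} {N : nat} (s : seq T) :
  (forall x, size (f x) = N) -> size (flatten (map f s)) = (N * size s)%N.
Proof.
move=> sizef; elim: s => [|x s IHs] /=; first by rewrite muln0.
by rewrite size_cat IHs sizef mulnS.
Qed.

Section WordPolynomials.
Variables (R : comNzRingType) (m : nat).
Implicit Types (c : 'I_m) (U V W : seq 'I_m).

Lemma PW_nil : PW R ([::] : seq 'I_m) = 0.
Proof. by rewrite /PW big_ord0. Qed.

Lemma PW_cons c W : PW R (c :: W) = (val c)%:R *: 'X^(size W) + PW R W.
Proof.
rewrite /PW /= big_ord_recr /= subSS subn0 subnn /= addrC; congr (_ + _).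
apply: eq_bigr => j _ /=.
by rewrite (_ : (size W - j = (size W - 1 - j).+1)%N) //; have := ltn_ord j; lia.
Qed.

Lemma PW_cat U V : PW R (U ++ V) = PW R U * 'X^(size V) + PW R V.
Proof.
elim: U => [|c U IHU] /=; first by rewrite PW_nil mul0r add0r.
by rewrite !PW_cons IHU size_cat addrA mulrDl -scalerAl -exprD addnC.
Qed.

Lemma betaW_nil (j : nat) : betaW R ([::] : seq 'I_m) j = 0.
Proof. by rewrite /betaW big_ord0. Qed.

Lemma betaW_cons c W (j : nat) :
  betaW R (c :: W) j = (if val c == j then 'X^(size W) else 0) + betaW R W j.
Proof.
rewrite /betaW /= big_mkcond big_ord_recl /= subSS !subn0; congr (_ + _).
rewrite [in RHS]big_mkcond; apply: eq_bigr => i _ /=.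
by rewrite add0n /bump leq0n add1n -subnDA add1n.
Qed.

Lemma PW_flatten_uniform (f : 'I_m -> seq 'I_m) (N : nat) W :
  (forall c, size (f c) = N) ->
  PW R (flatten (map f W)) = \sum_(b < m) (betaW R W b \Po 'X^N) * PW R (f b).
Proof.
move=> sizef; elim: W => [|c W IHW] /=.
  by rewrite PW_nil big1 // => b _; rewrite betaW_nil comp_poly0 mul0r.
rewrite PW_cat IHW (size_flatten_uniform W sizef).
under eq_bigr => b _ do rewrite betaW_cons comp_polyD mulrDl.
rewrite big_split /=; congr (_ + _).
rewrite (bigD1 c) //= eqxx big1 ?addr0; last first.
  by move=> b; rewrite val_eqE eq_sym => /negbTE ->; rewrite comp_poly0 mul0r.
by rewrite comp_Xn_poly -exprM mulrC mulnC.
Qed.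

End WordPolynomials.

Section MorphismIterates.
Variables (m : nat) (sigma : 'I_m -> seq 'I_m).

Lemma morph_word_cat (U V : seq 'I_m) :
  morph_word sigma (U ++ V) = morph_word sigma U ++ morph_word sigma V.
Proof. by rewrite /morph_word map_cat flatten_cat. Qed.

Lemma iter_morph_word (n : nat) (W : seq 'I_m) :
  iter n (morph_word sigma) W = flatten (map (morph_iter sigma n) W).
Proof.
elim: n W => [|n IHn] W /=; first by elim: W => //= c W <-.
by rewrite IHn; elim: W => //= c W IHW; rewrite morph_word_cat IHW.
Qed.

Lemma morph_iterSr (n : nat) (a : 'I_m) :
  morph_iter sigma n.+1 a = flatten (map (morph_iter sigma n) (sigma a)).
Proof.
by rewrite /morph_iter iterSr -/(morph_iter _ _ _) iter_morph_word /morph_word /= cats0.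
Qed.

Lemma size_morph_iter (p n : nat) (a : 'I_m) :
  (forall b, size (sigma b) = p) -> size (morph_iter sigma n a) = (p ^ n)%N.
Proof.
move=> sizesigma; elim: n a => [|n IHn] a //.
by rewrite morph_iterSr (size_flatten_uniform _ IHn) sizesigma expnS mulnC.
Qed.

Lemma col_PW_morph_iter (R : comNzRingType) (p n : nat) :
  (forall b, size (sigma b) = p) ->
  (\col_(a < m) PW R (morph_iter sigma n a) : 'cV[{poly R}]_m)
  = Msig_prod R sigma p n *m \col_(j < m) ((j : nat)%:R : {poly R}).
Proof.
move=> sizesigma; elim: n => [|n IHn].
  rewrite /= mul1mx; apply/matrixP => a j; rewrite !mxE.
  by rewrite /morph_iter /= PW_cons PW_nil addr0 expr0 scaler_nat.
rewrite /= -mulmxA -IHn; apply/matrixP => a j; rewrite !mxE.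
rewrite -[morph_word _ _]/(morph_iter sigma n.+1 a) morph_iterSr.
rewrite (@PW_flatten_uniform R m (morph_iter sigma n) (p ^ n)%N); last first.
  by move=> b; apply: size_morph_iter.
by apply: eq_bigr => b _; rewrite !mxE.
Qed.

End MorphismIterates.

Theorem corollary4p11 (p : nat) (m : nat) (n : nat)
  (sigma : 'I_m -> seq 'I_m) :
  prime p -> (0 < n)%N ->
  (forall a : 'I_m, size (sigma a) = p) ->
  (\col_(a < m) PW 'F_p (morph_iter sigma n a) : 'cV[{poly 'F_p}]_m)
  = Msig_prod 'F_p sigma p n *m \col_(j < m) ((j : nat)%:R : {poly 'F_p}).
Proof. by move=> _ _; exact: col_PW_morph_iter. Qed.
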